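(* (i) Let $a\in(0,1/2]$. For any $\rho,\rho'\in(0,1)$ with $\rho\ge a\rho'$, $$Q(\rho,\rho')\le\frac{5}{3a}K(\rho,\rho').$$ By contrast, for any constant $a>0$, $\sup\{Q(\rho,\rho')/L(\rho,\rho'):\rho,\rho'\in(0,1),\ \rho\ge a\rho'\}=\infty$. (ii) Consequently, if for a fixed $\gamma$ one has $\pi(X;\gamma)\ge a\,\pi^*(X)$ almost surely for some $a\in(0,1/2]$, then $$E\big[Q\{\pi(X;\gamma),\pi^*(X)\}\big]\le\frac{5}{3a}E\big[K\{\pi(X;\gamma),\pi^*(X)\}\big].$$
   Context: For $\rho,\rho'\in(0,1)$: $Q(\rho,\rho')=(\rho'/\rho-1)^2$, $K(\rho,\rho')=\rho'/\rho-1-\log(\rho'/\rho)$, $L(\rho,\rho')=\rho'\log(\rho/\rho')+(1-\rho')\log\{(1-\rho)/(1-\rho')\}$. In (ii), $\pi^*(X)=P(T=1\mid X)\in(0,1)$ and $\pi(X;\gamma)=\{1+e^{-\gamma^\top f(X)}\}^{-1}$. *)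

From Stdlib Require Import Reals Lra.
Open Scope R_scope.

Definition Qd (rho rho' : R) : R := (rho' / rho - 1) ^ 2.
Definition Kd (rho rho' : R) : R := rho' / rho - 1 - ln (rho' / rho).
Definition Ld (rho rho' : R) : R :=
  rho' * ln (rho / rho') + (1 - rho') * ln ((1 - rho) / (1 - rho')).

(* gamma^T v for vectors in R^p, represented as functions nat -> R on {0..p-1} *)
Fixpoint dot (p : nat) (g v : nat -> R) : R :=
  match p with
  | O => 0
  | S q => dot q g v + g q * v q
  end.

Definition pi_model {Xt : Type} (p : nat) (f : Xt -> nat -> R) (gamma : nat -> R)
  (x : Xt) : R := / (1 + exp (- dot p gamma (f x))).

(* Abstract expectation on a probability space Omega: an integrability predicate,
   an "almost surely" predicate, and an expectation functional. *)
Definition expectation_axioms {Omega : Type}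
  (Integrable : (Omega -> R) -> Prop) (AS : (Omega -> Prop) -> Prop)
  (E : (Omega -> R) -> R) : Prop :=
  (forall (P Q : Omega -> Prop), AS P -> (forall w, P w -> Q w) -> AS Q) /\
  (forall g c, Integrable g -> Integrable (fun w => c * g w)) /\
  (forall g c, Integrable g -> E (fun w => c * g w) = c * E g) /\
  (forall g h, Integrable g -> Integrable h ->
     AS (fun w => g w <= h w) -> E g <= E h).

(* With t = rho'/rho and u = 1/a >= 2, part (i) says that
   G t := 5u/3 (t - 1 - ln t) - (t - 1)^2 is nonnegative on (0, u].  Since
   G' t = (t - 1)(5u/3 - 2t)/t, G vanishes at 1, is increasing on [1, 5u/6] and
   decreasing elsewhere, so it suffices to check G u >= 0, which reduces to a
   one-variable inequality that is increasing in u and holds at u = 2 because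
   ln 2 < 0.7.  For the unboundedness of Q/L, the chi-square bound on the Bernoulli
   divergence -L gives Q/(-L) >= (1 - rho)/rho, which blows up as rho -> 0.
   Part (ii) is part (i) integrated. *)
From Stdlib Require Import Reals Lra Psatz.
From Coquelicot Require Import Coquelicot.
Open Scope R_scope.

Lemma le_of_derive_nonneg f f' a b : a <= b ->
  (forall x, a <= x <= b -> derivable_pt_lim f x (f' x)) ->
  (forall x, a < x < b -> 0 <= f' x) -> f a <= f b.
Proof.
intros Hab Hder Hpos.
destruct (Req_dec a b) as [<- | Hne]; [lra |].
destruct (MVT_cor2 f f' a b) as [c [Hfc Hc]]; [lra | exact Hder |].
assert (0 <= f' c * (b - a)) by (apply Rmult_le_pos; [apply Hpos |]; lra).
lra.
Qed.

Lemma ge_of_derive_nonpos f f' a b : a <= b ->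
  (forall x, a <= x <= b -> derivable_pt_lim f x (f' x)) ->
  (forall x, a < x < b -> f' x <= 0) -> f b <= f a.
Proof.
intros Hab Hder Hneg.
enough (- f a <= - f b) by lra.
apply (le_of_derive_nonneg (fun x => - f x) (fun x => - f' x) a b Hab).
- intros x Hx. apply derivable_pt_lim_opp, Hder, Hx.
- intros x Hx. specialize (Hneg x Hx). lra.
Qed.

Lemma ln_lt_sub1 y : 0 < y -> y <> 1 -> ln y < y - 1.
Proof.
intros Hy Hy1.
assert (Hln : ln y <> 0).
{ intros E. apply Hy1. rewrite <- (exp_ln y), E by exact Hy. apply exp_0. }
pose proof (exp_ineq1 (ln y) Hln) as Hexp. rewrite exp_ln in Hexp by exact Hy.
lra.
Qed.

Lemma ln_ge_1_sub_inv y : 0 < y -> 1 - / y <= ln y.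
Proof.
intros Hy.
pose proof (exp_ineq1_le (ln (/ y))) as Hexp.
rewrite exp_ln, ln_Rinv in Hexp by (try apply Rinv_0_lt_compat; exact Hy).
lra.
Qed.

Lemma ln2_lt_7_10 : ln 2 < 7 / 10.
Proof.
rewrite <- (ln_exp (7 / 10)). apply ln_increasing; [lra |].
pose proof (exp_ge_taylor (7 / 10) 3 ltac:(lra)) as Htaylor.
simpl in Htaylor. unfold Factorial.fact in Htaylor. simpl in Htaylor.
lra.
Qed.

Definition kl_excess c t := c * (t - 1 - ln t) - (t - 1) ^ 2.

Lemma kl_excess_1 c : kl_excess c 1 = 0.
Proof. unfold kl_excess. rewrite ln_1. ring. Qed.

Lemma kl_excess_derive c t : 0 < t ->
  derivable_pt_lim (kl_excess c) t ((t - 1) * (c - 2 * t) / t).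
Proof.
intros Ht. apply is_derive_Reals. unfold kl_excess.
auto_derive; [lra | field; lra].
Qed.

Definition endpoint_gap u := u - 1 - ln u - 3 * (u - 1) ^ 2 / (5 * u).

Lemma kl_excess_endpoint u : 0 < u ->
  kl_excess (5 * u / 3) u = 5 * u / 3 * endpoint_gap u.
Proof. intros Hu. unfold kl_excess, endpoint_gap. field. lra. Qed.

Lemma endpoint_gap_nonneg u : 2 <= u -> 0 <= endpoint_gap u.
Proof.
intros Hu.
assert (Hmono : endpoint_gap 2 <= endpoint_gap u).
{ apply (le_of_derive_nonneg endpoint_gap
           (fun x => (2 * x - 3) * (x - 1) / (5 * x ^ 2)) 2 u Hu).
  - intros x Hx. apply is_derive_Reals. unfold endpoint_gap.
    auto_derive; [lra | field; lra].
  - intros x Hx. apply Rdiv_le_0_compat; nra. }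
assert (0 < endpoint_gap 2) by (unfold endpoint_gap; pose proof ln2_lt_7_10; lra).
lra.
Qed.

Lemma kl_excess_nonneg u t : 2 <= u -> 0 < t <= u -> 0 <= kl_excess (5 * u / 3) t.
Proof.
intros Hu Ht. set (c := 5 * u / 3).
assert (Hder : forall a b, 0 < a -> forall x, a <= x <= b ->
          derivable_pt_lim (kl_excess c) x ((x - 1) * (c - 2 * x) / x)).
{ intros a b Ha x Hx. apply kl_excess_derive. lra. }
destruct (Rle_lt_dec t 1) as [Ht1 | Ht1]; [| destruct (Rle_lt_dec t (c / 2)) as [Htc | Htc]].
- rewrite <- (kl_excess_1 c).
  apply (ge_of_derive_nonpos _ _ t 1 Ht1 (Hder t 1 (proj1 Ht))).
  intros x Hx. unfold Rdiv. apply Rmult_le_0_r; [unfold c in *; nra |].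
  apply Rlt_le, Rinv_0_lt_compat. lra.
- rewrite <- (kl_excess_1 c).
  apply (le_of_derive_nonneg _ _ 1 t (Rlt_le _ _ Ht1) (Hder 1 t Rlt_0_1)).
  intros x Hx. apply Rdiv_le_0_compat; nra.
- apply Rle_trans with (kl_excess c u).
  + unfold c. rewrite kl_excess_endpoint by lra.
    apply Rmult_le_pos; [lra | apply endpoint_gap_nonneg, Hu].
  + apply (ge_of_derive_nonpos _ _ t u (proj2 Ht) (Hder t u (proj1 Ht))).
    intros x Hx. unfold Rdiv. apply Rmult_le_0_r; [nra |].
    apply Rlt_le, Rinv_0_lt_compat. lra.
Qed.

Lemma Qd_le_Kd a rho rho' : 0 < a <= 1 / 2 -> 0 < rho -> 0 < rho' ->
  rho >= a * rho' -> Qd rho rho' <= 5 / (3 * a) * Kd rho rho'.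
Proof.
intros Ha Hr Hr' Hge.
assert (Hu : 2 <= / a).
{ rewrite <- (Rinv_inv 2). apply Rinv_le_contravar; lra. }
assert (Hratio : rho' / rho <= / a).
{ apply (Rmult_le_reg_r (a * rho)); [nra |].
  replace (rho' / rho * (a * rho)) with (a * rho') by (field; lra).
  replace (/ a * (a * rho)) with rho by (field; lra). lra. }
pose proof (kl_excess_nonneg (/ a) (rho' / rho) Hu
              (conj (Rdiv_lt_0_compat _ _ Hr' Hr) Hratio)) as Hnonneg.
unfold kl_excess in Hnonneg. unfold Qd, Kd.
replace (5 / (3 * a)) with (5 * / a / 3) by (field; lra).
lra.
Qed.

Lemma Ld_neg rho rho' : 0 < rho < 1 -> 0 < rho' < 1 -> rho <> rho' ->
  Ld rho rho' < 0.
Proof.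
intros Hr Hr' Hne. unfold Ld.
assert (H1 : ln (rho / rho') < rho / rho' - 1).
{ apply ln_lt_sub1; [apply Rdiv_lt_0_compat; lra |].
  intros E. apply Hne. apply (Rmult_eq_reg_r (/ rho')); [| apply Rinv_neq_0_compat; lra].
  rewrite Rinv_r by lra. exact E. }
assert (H2 : ln ((1 - rho) / (1 - rho')) <= (1 - rho) / (1 - rho') - 1).
{ destruct (Req_dec ((1 - rho) / (1 - rho')) 1) as [-> | E]; [rewrite ln_1; lra |].
  apply Rlt_le, ln_lt_sub1; [apply Rdiv_lt_0_compat; lra | exact E]. }
apply Rmult_lt_compat_l with (r := rho') in H1; [| lra].
apply Rmult_le_compat_l with (r := 1 - rho') in H2; [| lra].
replace (rho' * (rho / rho' - 1)) with (rho - rho') in H1 by (field; lra).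
replace ((1 - rho') * ((1 - rho) / (1 - rho') - 1)) with (rho' - rho) in H2 by (field; lra).
lra.
Qed.

Lemma Ld_ge_neg_chi2 rho rho' : 0 < rho < 1 -> 0 < rho' < 1 ->
  - ((rho - rho') ^ 2 / (rho * (1 - rho))) <= Ld rho rho'.
Proof.
intros Hr Hr'. unfold Ld.
pose proof (ln_ge_1_sub_inv (rho / rho') ltac:(apply Rdiv_lt_0_compat; lra)) as H1.
pose proof (ln_ge_1_sub_inv ((1 - rho) / (1 - rho'))
              ltac:(apply Rdiv_lt_0_compat; lra)) as H2.
apply Rmult_le_compat_l with (r := rho') in H1; [| lra].
apply Rmult_le_compat_l with (r := 1 - rho') in H2; [| lra].
replace (- ((rho - rho') ^ 2 / (rho * (1 - rho))))
  with (rho' * (1 - / (rho / rho')) + (1 - rho') * (1 - / ((1 - rho) / (1 - rho'))))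
  by (field; repeat split; lra).
lra.
Qed.

Lemma Qd_div_Ld_ge rho rho' : 0 < rho < 1 -> 0 < rho' < 1 -> rho <> rho' ->
  (1 - rho) / rho <= Qd rho rho' / (- Ld rho rho').
Proof.
intros Hr Hr' Hne.
assert (Hsq : 0 < (rho - rho') ^ 2) by (apply pow2_gt_0; lra).
pose proof (Ld_neg rho rho' Hr Hr' Hne) as Hneg.
pose proof (Ld_ge_neg_chi2 rho rho' Hr Hr') as Hchi.
replace ((1 - rho) / rho)
  with (Qd rho rho' * / ((rho - rho') ^ 2 / (rho * (1 - rho))))
  by (unfold Qd; field; repeat split; lra).
apply Rmult_le_compat_l; [unfold Qd; apply pow2_ge_0 |].
apply Rinv_le_contravar; lra.
Qed.

Lemma Qd_div_Ld_unbounded a : 0 < a -> forall M : R, exists rho rho' : R,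
  0 < rho < 1 /\ 0 < rho' < 1 /\ rho >= a * rho' /\
  0 < - Ld rho rho' /\ M < Qd rho rho' / (- Ld rho rho').
Proof.
intros Ha M. pose proof (Rabs_pos M) as HM.
set (rho := / (Rabs M + 2)).
assert (Hr : 0 < rho < 1).
{ split; [apply Rinv_0_lt_compat; lra |].
  rewrite <- Rinv_1. apply Rinv_lt_contravar; lra. }
set (rho' := rho / (1 + a)).
assert (Hrho' : rho' * (1 + a) = rho) by (unfold rho'; field; lra).
assert (Hr' : 0 < rho' < 1) by (split; nra).
assert (Hne : rho <> rho') by nra.
exists rho, rho'.
split; [exact Hr |]. split; [exact Hr' |]. split; [nra |].
split; [pose proof (Ld_neg rho rho' Hr Hr' Hne); lra |].
eapply Rlt_le_trans; [| apply Qd_div_Ld_ge; [exact Hr | exact Hr' | exact Hne]].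
replace ((1 - rho) / rho) with (Rabs M + 1) by (unfold rho; field; lra).
pose proof (Rle_abs M). lra.
Qed.

Lemma pi_model_range {Xt : Type} p (f : Xt -> nat -> R) gamma x :
  0 < pi_model p f gamma x < 1.
Proof.
unfold pi_model. pose proof (exp_pos (- dot p gamma (f x))).
split; [apply Rinv_0_lt_compat; lra |].
rewrite <- Rinv_1. apply Rinv_lt_contravar; lra.
Qed.

Theorem proposition4 :
  (* (i), first claim *)
  (forall a rho rho' : R, 0 < a <= 1/2 ->
     0 < rho < 1 -> 0 < rho' < 1 -> rho >= a * rho' ->
     Qd rho rho' <= 5 / (3 * a) * Kd rho rho') /\
  (* (i), second claim: sup of Q / (-L) over the region is +infinity *)
  (forall a : R, 0 < a -> forall M : R, exists rho rho' : R,
     0 < rho < 1 /\ 0 < rho' < 1 /\ rho >= a * rho' /\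
     0 < - Ld rho rho' /\ M < Qd rho rho' / (- Ld rho rho')) /\
  (* (ii) *)
  (forall (Omega Xt : Type) (Integrable : (Omega -> R) -> Prop)
          (AS : (Omega -> Prop) -> Prop) (E : (Omega -> R) -> R)
          (X : Omega -> Xt) (pistar : Xt -> R)
          (p : nat) (f : Xt -> nat -> R) (gamma : nat -> R) (a : R),
     expectation_axioms Integrable AS E ->
     (forall x, 0 < pistar x < 1) ->
     0 < a <= 1/2 ->
     AS (fun w => pi_model p f gamma (X w) >= a * pistar (X w)) ->
     Integrable (fun w => Qd (pi_model p f gamma (X w)) (pistar (X w))) ->
     Integrable (fun w => Kd (pi_model p f gamma (X w)) (pistar (X w))) ->
     E (fun w => Qd (pi_model p f gamma (X w)) (pistar (X w)))
       <= 5 / (3 * a) * E (fun w => Kd (pi_model p f gamma (X w)) (pistar (X w)))).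
Proof.
split; [| split].
- intros a rho rho' Ha Hr Hr' Hge. apply Qd_le_Kd; tauto.
- exact Qd_div_Ld_unbounded.
- intros Omega Xt Int AS E X pistar p f gamma a [Has_mono [Hint_scal [HE_scal HE_mono]]]
    Hpistar Ha Has HintQ HintK.
  rewrite <- HE_scal by exact HintK.
  apply HE_mono; [exact HintQ | apply Hint_scal, HintK |].
  apply (Has_mono _ _ Has). intros w Hw.
  apply Qd_le_Kd; [exact Ha | apply pi_model_range | apply Hpistar | exact Hw].
Qed.
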